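(* Let $N\ge3$ be an integer, $(N+2)/(N-2)<p<p_{JL}$ and $\lambda>0$. For $\alpha>0$ let $u(r;\alpha)$ be the unique solution of \[ u''+\frac{N-1}{r}u'+\lambda u+|u|^{p-1}u=0\ (r>0),\qquad u(0)=\alpha,\ u'(0)=0. \] Then for each $\alpha>0$, $u(\cdot;\alpha)$ has a zero in $(0,\infty)$.
   Context: The Joseph–Lundgren exponent is $p_{JL}=1+\frac{4}{N-4-2\sqrt{N-1}}$ for $N\ge11$ and $p_{JL}=\infty$ for $3\le N\le10$. *)

From Stdlib Require Import Reals Lra.
From Coquelicot Require Import Coquelicot.
Open Scope R_scope.

Definition pJL (N : nat) : Rbar :=
  if (N <=? 10)%nat then p_infty
  else Finite (1 + 4 / (INR N - 4 - 2 * sqrt (INR N - 1))).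

Definition nonlin (p s : R) : R := Rpower (Rabs s) (p - 1) * s.

Definition is_radial_solution (N : nat) (p lambda alpha : R)
    (u du : R -> R) : Prop :=
  (forall r, 0 < r -> is_derive u r (du r)) /\
  (forall r, 0 < r -> ex_derive du r /\
     Derive du r + (INR N - 1) / r * du r + lambda * u r + nonlin p (u r) = 0) /\
  u 0 = alpha /\
  filterlim u (at_right 0) (locally alpha) /\
  filterlim du (at_right 0) (locally 0).

From Stdlib Require Import Reals Lra Lia Classical.
From Coquelicot Require Import Coquelicot.
Open Scope R_scope.

(* Sturm comparison.  If u stayed positive, v r := r^((N-1)/2) u r would be a
   positive solution of v'' + q v = 0 with
   q = lambda + |u|^(p-1) - (N-1)(N-3)/(4 r^2) >= k^2 := lambda/2 for r >= a.
   For s r := sin (k (r - a)) the Wronskian v' s - v s' then has derivative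
   (k^2 - q) v s <= 0 on [a, a + pi/k], yet it equals -k v(a) < 0 at the left
   end and k v(a + pi/k) > 0 at the right end. *)

Lemma is_derive_nonpos_le (f df : R -> R) (a b : R) :
  a <= b ->
  (forall x, a <= x <= b -> is_derive f x (df x)) ->
  (forall x, a <= x <= b -> df x <= 0) ->
  f b <= f a.
Proof.
intros Hab Hf Hdf.
assert (Hcont : forall x, a <= x <= b -> continuity_pt f x).
{ intros x Hx. apply continuity_pt_filterlim.
  apply (ex_derive_continuous (K := R_AbsRing) (V := R_NormedModule)).
  exists (df x). now apply Hf. }
pose proof (MVT_gen f a b df) as Hmvt; cbv zeta in Hmvt.
rewrite Rmin_left, Rmax_right in Hmvt by lra.
destruct Hmvt as [c [Hc Hfc]].
- intros x Hx. apply Hf. lra.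
- exact Hcont.
- pose proof (Hdf c Hc). nra.
Qed.

Lemma pos_of_no_root (f : R -> R) (l : R) :
  0 < l ->
  filterlim f (at_right 0) (locally l) ->
  (forall r, 0 < r -> continuous f r) ->
  (forall r, 0 < r -> f r <> 0) ->
  forall r, 0 < r -> 0 < f r.
Proof.
intros Hl Hlim Hcont Hroot r Hr.
destruct (Rlt_or_le 0 (f r)) as [Hpos | Hneg]; [exact Hpos | exfalso].
assert (Hnear : at_right 0 (fun x => 0 < x /\ x < r /\ 0 < f x)).
{ repeat apply filter_and.
  - exists (mkposreal _ Rlt_0_1). now intros y _ Hy.
  - unfold at_right, within. apply filter_imp with (2 := open_lt r 0 Hr).
    now intros y Hy _.
  - exact (Hlim _ (open_gt 0 l Hl)). }
destruct (Hierarchy.filter_ex _ Hnear) as [x [Hx [Hxr Hfx]]].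
destruct (Ranalysis5.IVT_interv (fun y => - f y) x r) as [z [Hz Hfz]].
- intros y Hy. apply continuity_pt_opp, continuity_pt_filterlim, Hcont. lra.
- exact Hxr.
- lra.
- specialize (Hroot r Hr). lra.
- apply (Hroot z); lra.
Qed.

Section SturmWronskian.

Variables (u du : R -> R) (m : nat) (k a : R).

(* v' s - v s' for v r = sqrt r ^ m * u r and s r = sin (k (r - a)); m = N - 1. *)
Definition sturm_wronskian (r : R) : R :=
  sqrt r ^ m * (du r * sin (k * (r - a))
    - u r * (k * cos (k * (r - a)) - INR m / (2 * r) * sin (k * (r - a)))).

Lemma is_derive_sturm_wronskian (r D : R) :
  0 < r -> is_derive u r (du r) -> is_derive du r D ->
  is_derive sturm_wronskian r
    (sqrt r ^ m * sin (k * (r - a)) *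
     (D + INR m / r * du r + (k ^ 2 + INR m * (INR m - 2) / (4 * r ^ 2)) * u r)).
Proof.
intros Hr Hu Hdu. unfold sturm_wronskian.
auto_derive.
- repeat split; try lra; eexists; eauto.
- replace (Derive (fun x => u x) r) with (du r)
    by (symmetry; now apply is_derive_unique).
  replace (Derive (fun x => du x) r) with D
    by (symmetry; now apply is_derive_unique).
  assert (Ht : 0 < sqrt r) by now apply sqrt_lt_R0.
  assert (Htt : sqrt r * sqrt r = r) by (apply sqrt_sqrt; lra).
  set (t := sqrt r) in *; clearbody t; subst r.
  destruct m as [|m']; cbn [Init.Nat.pred pow]; [|rewrite S_INR]; unfold Rminus.
  - simpl. field. lra.
  - field. lra.
Qed.

Lemma sturm_wronskian_left : sturm_wronskian a = - (sqrt a ^ m * k * u a).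
Proof.
unfold sturm_wronskian. rewrite Rminus_diag, Rmult_0_r, sin_0, cos_0. ring.
Qed.

Lemma sturm_wronskian_right :
  0 < k -> sturm_wronskian (a + PI / k) = sqrt (a + PI / k) ^ m * k * u (a + PI / k).
Proof.
intros Hk. unfold sturm_wronskian.
replace (k * (a + PI / k - a)) with PI by (field; lra).
rewrite sin_PI, cos_PI. ring.
Qed.

End SturmWronskian.

Lemma inverse_square_le (m lambda r : R) :
  0 < lambda -> 0 <= m -> 1 + m ^ 2 / lambda <= r ->
  m * (m - 2) / (4 * r ^ 2) <= lambda / 4.
Proof.
intros Hl Hm Hr.
assert (Hm2 : m ^ 2 <= lambda * (r - 1)).
{ replace (m ^ 2) with (lambda * (m ^ 2 / lambda)) by (field; lra).
  apply Rmult_le_compat_l; lra. }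
assert (Hr1 : 1 <= r) by (pose proof (pow2_ge_0 m); nra).
apply Rmult_le_reg_r with (4 * r ^ 2); [nra |].
unfold Rdiv. rewrite Rmult_assoc, Rinv_l by nra. nra.
Qed.

Section PositiveRadialSolution.

Variables (N : nat) (p lambda alpha : R) (u du : R -> R).
Hypotheses (HN : (1 <= N)%nat) (Hlambda : 0 < lambda)
  (Hsol : is_radial_solution N p lambda alpha u du).

Lemma radial_sturm_wronskian_deriv (k a r : R) :
  0 < r ->
  is_derive (sturm_wronskian u du (N - 1) k a) r
    (sqrt r ^ (N - 1) * sin (k * (r - a)) * u r *
     (k ^ 2 - lambda - Rpower (Rabs (u r)) (p - 1)
      + INR (N - 1) * (INR (N - 1) - 2) / (4 * r ^ 2))).
Proof.
intros Hr.
destruct Hsol as [Hdu [Hode _]].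
destruct (Hode r Hr) as [Hex Hrad]; unfold nonlin in Hrad.
eapply (@eq_ind R _ (is_derive (sturm_wronskian u du (N - 1) k a) r)).
- exact (is_derive_sturm_wronskian u du (N - 1) k a r _ Hr (Hdu r Hr)
           (Derive_correct _ _ Hex)).
- rewrite minus_INR by exact HN. simpl INR.
  replace (Derive du r) with (- ((INR N - 1) / r * du r) - lambda * u r
                              - Rpower (Rabs (u r)) (p - 1) * u r) by lra.
  ring.
Qed.

Lemma radial_solution_not_positive : ~ (forall r, 0 < r -> 0 < u r).
Proof.
intros Hpos.
set (m := (N - 1)%nat).
set (k := sqrt (lambda / 2)).
set (a := 1 + INR m ^ 2 / lambda).
set (W := sturm_wronskian u du m k a).
assert (Hk : 0 < k) by (apply sqrt_lt_R0; lra).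
assert (Hk2 : k ^ 2 = lambda / 2) by (rewrite <- Rsqr_pow2; apply Rsqr_sqrt; lra).
assert (Ha : 1 <= a).
{ pose proof (Rdiv_le_0_compat _ _ (pow2_ge_0 (INR m)) Hlambda). unfold a; lra. }
assert (HPk : 0 < PI / k) by (apply Rdiv_lt_0_compat; [apply PI_RGT_0 | exact Hk]).
assert (Hdecr : W (a + PI / k) <= W a).
{ eapply is_derive_nonpos_le; [lra | intros x Hx .. ].
  - apply radial_sturm_wronskian_deriv. lra.
  - fold m.
    assert (Hsin : 0 <= sin (k * (x - a))).
    { apply sin_ge_0; [nra |].
      replace PI with (k * (PI / k)) by (field; lra). nra. }
    assert (Hg : 0 <= Rpower (Rabs (u x)) (p - 1)) by (left; apply exp_pos).
    pose proof (inverse_square_le (INR m) lambda x Hlambda (pos_INR m) (proj1 Hx))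
      as Hsmall.
    pose proof (pow_le _ m (sqrt_pos x)) as Hweight.
    pose proof (Hpos x ltac:(lra)) as Hux.
    apply Rmult_le_0_l; [repeat apply Rmult_le_pos |]; lra. }
assert (HWa : W a < 0).
{ unfold W. rewrite sturm_wronskian_left.
  pose proof (pow_lt _ m (sqrt_lt_R0 a ltac:(lra))) as Hweight.
  pose proof (Hpos a ltac:(lra)) as Hua.
  enough (0 < sqrt a ^ m * k * u a) by lra.
  repeat apply Rmult_lt_0_compat; lra. }
assert (HWb : 0 < W (a + PI / k)).
{ unfold W. rewrite sturm_wronskian_right by exact Hk.
  pose proof (pow_lt _ m (sqrt_lt_R0 (a + PI / k) ltac:(lra))) as Hweight.
  pose proof (Hpos (a + PI / k) ltac:(lra)) as Hub.
  repeat apply Rmult_lt_0_compat; lra. }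
lra.
Qed.

End PositiveRadialSolution.

Theorem proposition3p1 (N : nat) (p lambda : R) :
  (3 <= N)%nat ->
  (INR N + 2) / (INR N - 2) < p ->
  Rbar_lt (Finite p) (pJL N) ->
  0 < lambda ->
  forall (alpha : R), 0 < alpha ->
  forall (u du : R -> R), is_radial_solution N p lambda alpha u du ->
  exists r, 0 < r /\ u r = 0.
Proof.
intros HN _ _ Hlambda alpha Halpha u du Hsol.
apply NNPP; intros Hnoroot.
apply (radial_solution_not_positive N p lambda alpha u du);
  [lia | exact Hlambda | exact Hsol |].
destruct Hsol as [Hdu [_ [_ [Hlim _]]]].
apply (pos_of_no_root u alpha Halpha Hlim).
- intros r Hr.
  apply (ex_derive_continuous (K := R_AbsRing) (V := R_NormedModule)).
  exists (du r). now apply Hdu.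
- intros r Hr Hu. apply Hnoroot. now exists r.
Qed.
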